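(* Let $l$ be a projective line in $\mathbb{CP}^3$. Then $l$ corresponds to a two-sphere (or a point) contained in the three-sphere $S^3$ if and only if $l=l^\perp$ with respect to the hermitian form $h$ on $\mathbb{C}^4$.
   Context: $\mathbb{H}$ denotes the quaternions, $\mathbb{H}=\mathbb{C}\oplus j\mathbb{C}$; $\mathbb{H}^2$ is a right $\mathbb{H}$-vector space identified with $\mathbb{C}^4$; $\mathbb{HP}^1=\{v\mathbb{H}\}\cong S^4$, $\mathbb{CP}^3=\mathbb{P}(\mathbb{C}^4)$. Under the twistor projection $v\mathbb{C}\mapsto v\mathbb{H}$, each projective line of $\mathbb{CP}^3$ is either a twistor fibre (the line through $[v],[vj]$, corresponding to the point $v\mathbb{H}$) or the twistor lift of a round two-sphere, whose image under the projection is that two-sphere. Fix an $\mathbb{H}$-basis $e_1,e_2$ and the quaternionic hermitian form $\mathfrak{h}(e_1a+e_2b,e_1c+e_2d)=\bar a d+\bar b c$; write $\mathfrak{h}=h+j\omega$ with $h,\omega$ $\mathbb{C}$-valued; $h$ is a hermitian form on $\mathbb{C}^4$. $S^3=\{x\mathbb{H}:\mathfrak{h}(x,x)=0\}$. For a projective line $l$, $l^\perp=\mathbb{P}\{x:h(x,y)=0\ \forall y\in l\}$. A line ''corresponds to a two-sphere or point contained in $S^3$'' if its image under the twistor projection is contained in $S^3$. *)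

From HB Require Import structures.
From mathcomp Require Import all_boot all_order all_algebra.
Set Implicit Arguments. Unset Strict Implicit. Unset Printing Implicit Defensive.
Import Order.TTheory GRing.Theory Num.Theory.
Local Open Scope ring_scope.

(* The complex numbers are modelled by an arbitrary numeric closed field C
   (a field with a conjugation x^*, e.g. the complex numbers themselves). *)

(* Quaternions H = C (+) jC : the pair (z, w) stands for z + j w,
   with j^2 = -1 and z j = j z^*. *)
Definition quat (C : numClosedFieldType) : Type := (C * C)%type.

Definition qzero (C : numClosedFieldType) : quat C := (0, 0).
Definition qadd (C : numClosedFieldType) (p q : quat C) : quat C :=
  (p.1 + q.1, p.2 + q.2).
(* (z1 + j w1)(z2 + j w2) = (z1 z2 - w1^* w2) + j (z1^* w2 + w1 z2) *)
Definition qmul (C : numClosedFieldType) (p q : quat C) : quat C :=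
  (p.1 * q.1 - p.2^* * q.2, p.1^* * q.2 + p.2 * q.1).
(* conj (z + j w) = z^* - j w *)
Definition qconj (C : numClosedFieldType) (p : quat C) : quat C :=
  (p.1^*, - p.2).

(* H^2 as a right H-vector space: pairs (a, b) = e1 a + e2 b. *)
Definition H2 (C : numClosedFieldType) : Type := (quat C * quat C)%type.
Definition H2zero (C : numClosedFieldType) : H2 C := (qzero C, qzero C).
Definition H2scale (C : numClosedFieldType) (x : H2 C) (q : quat C) : H2 C :=
  (qmul x.1 q, qmul x.2 q).

(* quaternionic hermitian form  h(e1 a + e2 b, e1 c + e2 d) = a^- d + b^- c *)
Definition hq (C : numClosedFieldType) (x y : H2 C) : quat C :=
  qadd (qmul (qconj x.1) y.2) (qmul (qconj x.2) y.1).

(* identification C^4 = H^2 : (v0,v1,v2,v3) |-> e1 (v0 + j v1) + e2 (v2 + j v3);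
   right multiplication by C is coordinatewise. *)
Definition toH2 (C : numClosedFieldType) (v : 'rV[C]_4) : H2 C :=
  ((v 0 0, v 0 1), (v 0 2%:R, v 0 3%:R)).

(* the C-valued hermitian form h, where hq = h + j omega *)
Definition hC (C : numClosedFieldType) (x y : 'rV[C]_4) : C :=
  (hq (toH2 x) (toH2 y)).1.

(* the quaternionic line x H (a point of HP^1), as a predicate on H^2 *)
Definition qline (C : numClosedFieldType) (x : H2 C) : H2 C -> Prop :=
  fun y => exists q : quat C, y = H2scale x q.

(* the point v H of HP^1 lies in S^3 = { x H : hq(x,x) = 0 } *)
Definition in_S3 (C : numClosedFieldType) (v : H2 C) : Prop :=
  exists x : H2 C, x <> H2zero C /\ hq x x = qzero C /\
    (forall y, qline x y <-> qline v y).

(* A projective line of CP^3 is the row space of a rank-2 matrix l : 'M_(2,4).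
   Its image under the twistor projection v C |-> v H is contained in S^3. *)
Definition twistor_image_in_S3 (C : numClosedFieldType) (l : 'M[C]_(2,4)) : Prop :=
  forall v : 'rV[C]_4, (v <= l)%MS -> v != 0 -> in_S3 (toH2 v).

(* l = l^perp, where l^perp = P{ x : h(x,y) = 0 for all y in l } *)
Definition self_perp (C : numClosedFieldType) (l : 'M[C]_(2,4)) : Prop :=
  forall x : 'rV[C]_4, (x <= l)%MS <-> (forall y : 'rV[C]_4, (y <= l)%MS -> hC x y = 0).

(* Under C^4 = H^2 the hermitian form h is the complex part of the
   quaternionic form hq, and hq(v,v) = (h(v,v), 0).  Since hq(xq, xq) =
   q^- hq(x,x) q, a point v H lies in S^3 exactly when h(v,v) = 0, so the
   twistor image of l lies in S^3 iff l is h-isotropic, i.e. (by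
   polarization) totally h-isotropic, i.e. l is contained in l^perp.  As h is
   nondegenerate on C^4, l^perp has dimension 4 - 2 = 2, so l <= l^perp
   forces l = l^perp. *)

From mathcomp Require Import all_boot all_order all_algebra.
From mathcomp Require Import all_fingroup ring.
Set Implicit Arguments.
Unset Strict Implicit.
Unset Printing Implicit Defensive.
Import GRing.Theory Num.Theory.
Local Open Scope ring_scope.

Definition o0 : 'I_4 := @Ordinal 4 0 isT.
Definition o1 : 'I_4 := @Ordinal 4 1 isT.
Definition o2 : 'I_4 := @Ordinal 4 2 isT.
Definition o3 : 'I_4 := @Ordinal 4 3 isT.

Lemma ord4_ringE :
  [/\ (0 : 'I_(2.+2)) = o0, (1 : 'I_(2.+2)) = o1,
      (2%:R : 'I_(2.+2)) = o2 & (3%:R : 'I_(2.+2)) = o3].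
Proof. by split; apply: val_inj. Qed.

(* The Gram matrix of h is the permutation matrix of (0 2)(1 3). *)
Definition hgram_perm : 'S_4 := (tperm o0 o2 * tperm o1 o3)%g.

Lemma hgram_permE :
  [/\ hgram_perm o0 = o2, hgram_perm o1 = o3, hgram_perm o2 = o0 & hgram_perm o3 = o1].
Proof. by rewrite /hgram_perm !permM !permE; split; apply: val_inj. Qed.

Lemma big_ord4 (R : nmodType) (F : 'I_4 -> R) :
  \sum_i F i = F o0 + F o1 + F o2 + F o3.
Proof.
rewrite !big_ord_recl big_ord0 addr0 !addrA.
by congr (F _ + F _ + F _ + F _); apply: val_inj.
Qed.

Section HermitianForm.
Variable C : numClosedFieldType.
Implicit Types (v x y z w : 'rV[C]_4) (a : C).

Lemma hCE x y : hC x y = (x 0 o0)^* * y 0 o2 + (x 0 o1)^* * y 0 o3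
   + (x 0 o2)^* * y 0 o0 + (x 0 o3)^* * y 0 o1.
Proof.
rewrite /hC /hq /toH2 /qadd /qmul /qconj /=.
case: ord4_ringE => -> -> -> ->; rewrite !rmorphN; ring.
Qed.

Lemma hC_conj x y : hC y x = (hC x y)^*.
Proof. by rewrite !hCE !rmorphD !rmorphM /= !conjCK; ring. Qed.

Lemma hCDl x y z : hC (x + y) z = hC x z + hC y z.
Proof. by rewrite !hCE !mxE !rmorphD /=; ring. Qed.

Lemma hCDr x y z : hC z (x + y) = hC z x + hC z y.
Proof. by rewrite !hCE !mxE; ring. Qed.

Lemma hCZl a x y : hC (a *: x) y = a^* * hC x y.
Proof. by rewrite !hCE !mxE !rmorphM /=; ring. Qed.

Lemma hCZr a x y : hC x (a *: y) = a * hC x y.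
Proof. by rewrite !hCE !mxE; ring. Qed.

Lemma hC0r x : hC x 0 = 0.
Proof. by rewrite hCE !mxE; ring. Qed.

Lemma hC_mulmxr m x (u : 'rV_m) (U : 'M_(m, 4)) :
  hC x (u *m U) = \sum_k u 0 k * hC x (row k U).
Proof.
rewrite mulmx_sum_row (big_morph _ (fun y z => hCDr y z x) (hC0r x)).
by apply: eq_bigr => k _; rewrite hCZr.
Qed.

Definition h_isotropic m (U : 'M[C]_(m, 4)) : Prop :=
  forall x y, (x <= U)%MS -> (y <= U)%MS -> hC x y = 0.

Lemma h_polarization m (U : 'M[C]_(m, 4)) :
  (forall v, (v <= U)%MS -> hC v v = 0) -> h_isotropic U.
Proof.
move=> isoU x y xU yU.
have := isoU _ (addmx_sub xU yU).
have := isoU _ (addmx_sub xU (scalemx_sub 'i yU)).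
rewrite !(hCDl, hCDr, hCZl, hCZr) conjCi (isoU x xU) (isoU y yU).
rewrite !(mulr0, addr0, add0r) => eq_i eq_1.
have i2_neq0 : ('i *+ 2 : C) != 0 by rewrite mulrn_eq0 /= neq0Ci.
apply: (mulfI i2_neq0); rewrite mulr0.
have : 'i * (hC x y + hC y x) + ('i * hC x y + - 'i * hC y x) = 0.
  by rewrite eq_1 eq_i mulr0 addr0.
by move=> <-; ring.
Qed.

Definition hdual m (U : 'M[C]_(m, 4)) : 'M[C]_(4, m) :=
  \matrix_(i, k) (U k (hgram_perm i))^*.

Lemma mul_hdual m (U : 'M[C]_(m, 4)) w k : (w *m hdual U) 0 k = hC (row k U) w.
Proof. by rewrite !mxE big_ord4 hCE !mxE; case: hgram_permE => -> -> -> ->; ring. Qed.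

Lemma mxrank_hdual m (U : 'M[C]_(m, 4)) : \rank (hdual U) = \rank U.
Proof.
have -> : hdual U = (map_mx (@Num.Def.conjC C) (col_perm hgram_perm U))^T.
  by apply/matrixP => i k; rewrite !mxE.
by rewrite mxrank_tr mxrank_map col_permE mxrankMfree ?row_free_unit ?unitmx_perm.
Qed.

Lemma sub_kermx_hdual m (U : 'M[C]_(m, 4)) w :
  (w <= kermx (hdual U))%MS <-> forall y, (y <= U)%MS -> hC w y = 0.
Proof.
split=> [/sub_kermxP wU0 y /submxP[u ->] | perpU].
  rewrite hC_mulmxr big1 // => k _.
  by rewrite hC_conj -mul_hdual wU0 mxE rmorph0 mulr0.
apply/sub_kermxP/matrixP => i k.
by rewrite ord1 mul_hdual mxE hC_conj perpU ?rmorph0 ?row_sub.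
Qed.

Lemma self_perp_isotropic (l : 'M[C]_(2, 4)) :
  \rank l = 2%N -> self_perp l <-> h_isotropic l.
Proof.
move=> rank_l; split=> [perp_l x y xl yl | iso_l z]; first exact: (perp_l x).1.
split=> [zl y yl | /sub_kermx_hdual perp_z]; first exact: iso_l.
have l_perp : (l <= kermx (hdual l))%MS.
  by apply/row_subP => i; apply/sub_kermx_hdual => y; apply: iso_l; rewrite row_sub.
have perp_l : (kermx (hdual l) <= l)%MS.
  by rewrite -(geq_leqif (mxrank_leqif_sup l_perp)) mxrank_ker mxrank_hdual rank_l.
exact: submx_trans perp_z perp_l.
Qed.

Lemma hq_toH2 v : hq (toH2 v) (toH2 v) = (hC v v, 0).
Proof.
rewrite /hC; case E: (hq _ _) => [a b] /=; congr pair; move: E.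
by rewrite /hq /toH2 /qadd /qmul /qconj /= => -[_ <-]; rewrite ?rmorphN /= ?conjCK; ring.
Qed.

Lemma hq_scale (x : H2 C) (q : quat C) :
  hq (H2scale x q) (H2scale x q) = qmul (qconj q) (qmul (hq x x) q).
Proof.
case: x => [[a1 a2] [b1 b2]]; case: q => [q1 q2].
rewrite /hq /H2scale /qmul /qconj /qadd /=; congr pair;
by rewrite !(rmorphD, rmorphB, rmorphM, rmorphN) /= !conjCK; ring.
Qed.

Lemma H2scale1 (x : H2 C) : H2scale x (1, 0) = x.
Proof.
case: x => [[a b] [c d]]; rewrite /H2scale /qmul /= ?conjC0 ?conjC1.
by congr pair; congr pair; ring.
Qed.

Lemma toH2_eq0 v : toH2 v = H2zero C -> v = 0.
Proof.
rewrite /toH2 /H2zero /qzero; case: ord4_ringE => -> -> -> -> [v0 v1 v2 v3].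
apply/rowP => i; rewrite mxE.
by case: i => -[|[|[|[|//]]]] i_lt4;
  [rewrite -v0 | rewrite -v1 | rewrite -v2 | rewrite -v3]; congr (v 0 _); apply: val_inj.
Qed.

Lemma in_S3_toH2 v : v != 0 -> in_S3 (toH2 v) <-> hC v v = 0.
Proof.
move=> v_neq0; split=> [[x [_ [hq_x0 x_v]]] | hvv0].
  have [q v_xq] : qline x (toH2 v) by apply/x_v; exists (1, 0); rewrite H2scale1.
  have := hq_scale x q; rewrite -v_xq hq_x0 hq_toH2 /qmul /qconj /= => -[-> _].
  by rewrite rmorph0; ring.
exists (toH2 v); split; last by rewrite hq_toH2 hvv0.
by move/toH2_eq0/eqP; apply/negP.
Qed.

Lemma twistor_image_in_S3_isotropic (l : 'M[C]_(2, 4)) :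
  twistor_image_in_S3 l <-> h_isotropic l.
Proof.
split=> [S3_l | iso_l v vl v_neq0]; last by apply/in_S3_toH2 => //; apply: iso_l.
apply: h_polarization => v vl; have [->|v_neq0] := eqVneq v 0.
  by rewrite hC0r.
exact/(in_S3_toH2 v_neq0)/S3_l.
Qed.

End HermitianForm.

Theorem mainTheorem7 (C : numClosedFieldType) (l : 'M[C]_(2,4)) :
  \rank l = 2%N ->
  (twistor_image_in_S3 l <-> self_perp l).
Proof.
move=> rank_l; rewrite (self_perp_isotropic rank_l).
exact: twistor_image_in_S3_isotropic.
Qed.
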